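(* There exists a $\mathbb{Q}$-linear map $\phi:\mathbb{Y}\to\mathbb{Q}[t]$ such that $\phi(Y_P)=t^{\mathrm{sink}(P)}$ for every signed poset $P$, where $\mathrm{sink}(P)$ is the number of sinks of $P$.
   Context: A signed graph $\Sigma$ is a finite graph (loops and multiple edges allowed) with $\mathrm{sgn}:E(\Sigma)\to\{+,-\}$; write $e:uv$ if $e$ has endpoints $u,v$. A coloring $\kappa:V(\Sigma)\to\mathbb{Z}$ is proper if $\kappa(u)\ne\mathrm{sgn}(e)\kappa(v)$ for every edge $e:uv$. An orientation assigns to each half-edge (incidence of an edge with an endpoint; a loop has two) an arrow toward or away from the vertex, such that on a positive edge exactly one of the two arrows points toward its vertex and on a negative edge both point toward or both point away. A cycle is a closed walk in which, considering only the edges of the walk, every vertex of the walk has at least one arrow pointing into it and one pointing out of it; an orientation is acyclic if it has no cycle; a sink is a vertex all of whose incident arrows point toward it (an isolated vertex is a sink). A signed poset is an acyclic orientation $P$ of a signed graph. A proper coloring $\kappa$ preserves $P$ if for every edge $e$ and each endpoint $v$ of $e$, with $u$ the other endpoint ($u=v$ for a loop), the arrow of $P$ at the incidence of $e$ with $v$ points toward $v$ iff $\kappa(v)>\mathrm{sgn}(e)\kappa(u)$. Let $Y_P=\sum_{\kappa}\prod_{v}x_{\kappa(v)}$ over proper colorings $\kappa$ preserving $P$ (variables $x_i$, $i\in\mathbb{Z}$), and let $\mathbb{Y}$ be the $\mathbb{Q}$-span of all $Y_P$, over all signed posets $P$ of all signed graphs. *)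

From HB Require Import structures.
From mathcomp Require Import all_boot all_order all_algebra.
Set Implicit Arguments. Unset Strict Implicit. Unset Printing Implicit Defensive.
Import Order.TTheory GRing.Theory Num.Theory.
Local Open Scope ring_scope.

(* A signed graph: vertices 'I_nv, edges 'I_ne (loops and multiple edges
   allowed), each edge e has an ordered pair of endpoints ends e and a sign
   (true = +, false = -). *)
Record sgraph := SGraph {
  nv : nat;
  ne : nat;
  ends : 'I_ne -> 'I_nv * 'I_nv;
  sgn : 'I_ne -> bool }.

Definition sgnZ (G : sgraph) (e : 'I_(ne G)) : int := if sgn e then 1 else -1.

(* Half-edges of e are (e,false) (at (ends e).1) and (e,true) (at (ends e).2);
   a loop has two half-edges at the same vertex. *)
Definition hend (G : sgraph) (e : 'I_(ne G)) (b : bool) : 'I_(nv G) :=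
  if b then (ends e).2 else (ends e).1.

(* An arrow assignment: tau e b = true iff the arrow at half-edge (e,b)
   points toward its vertex hend e b. *)
Definition arrows (G : sgraph) := 'I_(ne G) -> bool -> bool.

Definition is_orientation (G : sgraph) (tau : arrows G) : Prop :=
  forall e : 'I_(ne G), (tau e false != tau e true) = sgn e.

Definition link (G : sgraph) (e : 'I_(ne G)) (u v : 'I_(nv G)) : bool :=
  (ends e == (u, v)) || (ends e == (v, u)).

Fixpoint is_walk (G : sgraph) (u : 'I_(nv G)) (w : seq ('I_(ne G) * 'I_(nv G))) : bool :=
  match w with
  | [::] => true
  | (e, v) :: w' => link e u v && is_walk v w'
  end.

Definition closed_walk (G : sgraph) (u : 'I_(nv G)) (w : seq ('I_(ne G) * 'I_(nv G))) : bool :=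
  [&& w != [::], is_walk u w & last u (map snd w) == u].

Definition is_cycle (G : sgraph) (tau : arrows G) (u : 'I_(nv G))
    (w : seq ('I_(ne G) * 'I_(nv G))) : Prop :=
  closed_walk u w /\
  forall x, x \in u :: map snd w ->
    (exists e b, [/\ e \in map fst w, hend e b = x & tau e b]) /\
    (exists e b, [/\ e \in map fst w, hend e b = x & ~~ tau e b]).

Definition acyclic (G : sgraph) (tau : arrows G) : Prop :=
  forall u w, ~ is_cycle tau u w.

Record signed_poset := SPoset {
  sp_graph : sgraph;
  sp_tau : arrows sp_graph;
  sp_orient : is_orientation sp_tau;
  sp_acyclic : acyclic sp_tau }.

Definition is_sink (G : sgraph) (tau : arrows G) (v : 'I_(nv G)) : bool :=
  [forall e, forall b, (hend e b == v) ==> tau e b].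

Definition nsinks (P : signed_poset) : nat :=
  #|[pred v | is_sink (@sp_tau P) v]|.

Definition proper (G : sgraph) (kap : 'I_(nv G) -> int) : bool :=
  [forall e, kap (ends e).1 != sgnZ e * kap (ends e).2].

Definition preserves (G : sgraph) (tau : arrows G) (kap : 'I_(nv G) -> int) : bool :=
  [forall e, forall b, tau e b == (sgnZ e * kap (hend e (~~ b)) < kap (hend e b))].

(* Formal power series in the variables x_i (i : int): a monomial is
   represented by a list of indices (with multiplicity, up to permutation),
   and a series by its coefficient function. *)
Definition monomial := seq int.
Definition series := monomial -> rat.

(* The number of proper colorings kap preserving P whose monomial
   prod_v x_{kap v} equals the monomial m (colorings with that monomial take
   values in m, so they are enumerated as finite functions into seq_sub m). *)
Definition Ycoef (P : signed_poset) (m : monomial) : nat :=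
  #|[pred k : {ffun 'I_(nv (sp_graph P)) -> seq_sub m} |
      let kap := fun v => ssval (k v) in
      [&& proper kap, preserves (@sp_tau P) kap &
          perm_eq [seq kap v | v <- enum 'I_(nv (sp_graph P))] m]]|.

Definition YP (P : signed_poset) : series := fun m => (Ycoef P m)%:R.

(* The Q-span of all Y_P. *)
Definition inY (f : series) : Prop :=
  exists s : seq (rat * signed_poset),
    f = fun m => \sum_(p <- s) p.1 * YP p.2 m.

(* For a set [R] of vertices let [C_R(k)] count the colorings of [R], valid on
   the edges inside [R], whose absolute values are exactly [1..k] (with [0]
   allowed).  In such a coloring of level [k+1] the vertices coloured [k+1]
   (resp. [-(k+1)]) form a set of sinks (resp. sources) of [R], and deleting them
   leaves a coloring of level [k]; conversely any disjoint such pair of sets can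
   be put on top of a coloring of level [k].  By induction on [|R|] this gives
   [sum_k (-1)^(|R|+k) C_R(k) = 1], acyclicity entering only through the fact
   that [R] has an edge exactly when its sinks and sources differ.  Likewise a
   coloring of level [k] topped by a layer [S] coloured [+(k+1)] is a set [S] of
   sinks together with a coloring of level [k] of the other vertices, so giving
   it the weight [(-1)^(n-|S|+k) (t-1)^|S|] and summing over all valid colorings
   yields [sum_(S <= sinks) (t-1)^|S| = t^sink(P)].  The weight only depends on
   the multiset of colours, i.e. on the monomial, so it defines a linear
   functional on the coefficients of [Y_P]. *)

From Pilot Require Import Defs.
From mathcomp Require Import all_boot all_order all_algebra.
From mathcomp Require Import zify ring.
From Stdlib Require Import ClassicalEpsilon.
Set Implicit Arguments. Unset Strict Implicit. Unset Printing Implicit Defensive.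
Import Order.TTheory GRing.Theory Num.Theory.
Local Open Scope ring_scope.

Lemma card_in_bij (T1 T2 : finType) (A : {pred T1}) (B : {pred T2})
    (f : T1 -> T2) (g : T2 -> T1) :
  {in A, forall x, f x \in B} -> {in B, forall y, g y \in A} ->
  {in A, cancel f g} -> {in B, cancel g f} -> #|A| = #|B|.
Proof.
move=> fAB gBA fK gK; rewrite -(card_in_imset (can_in_inj fK)).
apply: eq_card => y; apply/imsetP/idP => [[x xA ->]|yB]; first exact: fAB.
by exists (g y); rewrite ?gK ?gBA.
Qed.

Section SubsetSums.
Variable T : finType.
Implicit Types S : {set T}.

Lemma sum_subsetsD1 (R : nmodType) (F : {set T} -> R) S v : v \in S ->
  \sum_(B : {set T} | B \subset S) F B = \sum_(B : {set T} | B \subset S :\ v) (F B + F (v |: B)).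
Proof.
move=> vS; rewrite big_split /= (bigID (fun B : {set T} => v \in B)) /= addrC.
congr (_ + _); first by apply: eq_bigl => B; rewrite subsetD1 andbC.
rewrite (reindex_onto (fun B : {set T} => v |: B) (fun B : {set T} => B :\ v)) /=; last first.
  by move=> B /andP[_ vB]; rewrite setD1K.
apply: eq_bigl => B; rewrite setU11 andbT subUset sub1set vS /= subsetD1.
have [vB|vB] := boolP (v \in B); last by rewrite setU1K // eqxx.
by rewrite !andbF; apply/negbTE/negP => /andP[_ /eqP/setP/(_ v)]; rewrite setD11 vB.
Qed.

Lemma sum_subsets_exp (R : comPzRingType) (x : R) S :
  \sum_(B : {set T} | B \subset S) x ^+ #|B| = (1 + x) ^+ #|S|.
Proof.
elim: {S}_.+1 {-2}S (ltnSn #|S|) => // n IH S.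
have [->|[v vS]] := set_0Vmem S => [_|cS].
  by rewrite (big_pred1 set0) ?cards0 // => B; rewrite subset0.
rewrite (sum_subsetsD1 _ vS) (cardsD1 v S) vS exprS -IH; last first.
  by move: cS; rewrite (cardsD1 v S) vS.
rewrite mulr_sumr; apply: eq_bigr => B; rewrite subsetD1 => /andP[_ vB].
by rewrite cardsU1 vB exprS mulrDl mul1r.
Qed.

Lemma sum_subsets_sign (R : comPzRingType) S :
  \sum_(B : {set T} | B \subset S) (-1 : R) ^+ #|B| = (S == set0)%:R.
Proof. by rewrite sum_subsets_exp subrr expr0n cards_eq0; case: (S == set0). Qed.

Lemma sum_subsets_sign_sup (R : comPzRingType) S1 S2 :
  \sum_(P : {set T} | P \subset S1) (-1 : R) ^+ #|P| * (S2 \subset P)%:R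
  = (S1 == S2)%:R * (-1) ^+ #|S1|.
Proof.
have [<-|neS] := eqVneq S1 S2.
  rewrite (bigD1 S1) //= subxx mulr1 mul1r big1 ?addr0 // => P /andP[sP nP].
  by rewrite (_ : S1 \subset P = false) ?mulr0 //; apply: contraNF nP => sS; rewrite eqEsubset sP.
rewrite mul0r; have [s21|/subsetPn[v v2 v1]] := boolP (S2 \subset S1); last first.
  rewrite big1 // => P sP; rewrite (_ : S2 \subset P = false) ?mulr0 //.
  by apply: contraNF v1 => /subsetP/(_ v v2)/(subsetP sP).
have /subsetPn[v v1 v2] : ~~ (S1 \subset S2) by apply: contra neS => sS; rewrite eqEsubset sS.
rewrite (sum_subsetsD1 _ v1) big1 // => B; rewrite subsetD1 => /andP[_ vB].
have -> : (S2 \subset v |: B) = (S2 \subset B).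
  by rewrite -subDset (setDidPl _) // disjoint_sym disjoints1.
by rewrite cardsU1 vB exprS mulN1r mulNr subrr.
Qed.

Lemma sum_disjoint_subsets_sign (R : comPzRingType) S1 S2 :
  \sum_(P : {set T} | P \subset S1) \sum_(M : {set T} | M \subset S2)
    [disjoint P & M]%:R * (-1 : R) ^+ (#|P| + #|M|)
  = (S1 == S2)%:R * (-1) ^+ #|S1|.
Proof.
rewrite -sum_subsets_sign_sup; apply: eq_bigr => P _.
rewrite -(setD_eq0 S2 P) -sum_subsets_sign mulr_sumr big_mkcond [RHS]big_mkcond /=.
apply: eq_bigr => M _; rewrite subsetD disjoint_sym exprD.
by case: (M \subset S2); case: [disjoint M & P]; rewrite /= ?mul1r ?mul0r.
Qed.

Lemma sum_disjoint_nonempty_subsets_sign (R : comPzRingType) S1 S2 :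
  \sum_(P : {set T} | P \subset S1) \sum_(M : {set T} | M \subset S2)
    ([disjoint P & M] && (P :|: M != set0))%:R * (-1 : R) ^+ (#|P| + #|M|)
  = (S1 == S2)%:R * (-1) ^+ #|S1| - 1.
Proof.
have empty : \sum_(P : {set T} | P \subset S1) \sum_(M : {set T} | M \subset S2)
    ((P == set0) && (M == set0))%:R * (-1 : R) ^+ (#|P| + #|M|) = 1.
  rewrite (bigD1 set0) ?sub0set //= [X in _ + X]big1 ?addr0; last first.
    by move=> P /andP[_ /negbTE nP]; rewrite big1 // => M _; rewrite nP mul0r.
  rewrite (bigD1 set0) ?sub0set //= !eqxx cards0 mul1r big1 ?addr0 // => M /andP[_ /negbTE nM].
  by rewrite nM mul0r.
rewrite -sum_disjoint_subsets_sign -[X in _ = _ - X]empty -sumrB; apply: eq_bigr => P _.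
rewrite -sumrB; apply: eq_bigr => M _.
rewrite -mulrBl -setU_eq0; have [PM0|_] := boolP (P :|: M == set0); last by rewrite andbT subr0.
move: PM0; rewrite setU_eq0 andbF => /andP[/eqP-> /eqP->].
by rewrite disjoints_subset sub0set subrr.
Qed.

End SubsetSums.

Definition edge_ok (s t0 t1 : bool) (a b : int) : bool :=
  let sb := (if s then 1 else -1) * b in
  let sa := (if s then 1 else -1) * a in
  [&& a != sb, t0 == (sb < a) & t1 == (sa < b)].

Lemma edge_ok_top (s t0 t1 : bool) (a b : int) (k : nat) :
  edge_ok s t0 t1 a b -> `|a| <= k.+1 -> `|b| <= k.+1 ->
  [/\ a = k.+1%:Z -> t0, b = k.+1%:Z -> t1, a = - k.+1%:Z -> ~~ t0 & b = - k.+1%:Z -> ~~ t1].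
Proof.
rewrite /edge_ok; case: s t0 t1 => [] [] [] /=; rewrite ?mul1r ?mulN1r => ok ha hb;
  by split => E; move: ok; rewrite E; lia.
Qed.

Lemma edge_ok_lift (s t0 t1 : bool) (a b : int) (k : nat) :
  (t0 != t1) = s ->
  [\/ a = k.+1%:Z /\ t0, a = - k.+1%:Z /\ ~~ t0 | `|a| <= k] ->
  [\/ b = k.+1%:Z /\ t1, b = - k.+1%:Z /\ ~~ t1 | `|b| <= k] ->
  ~ (`|a| <= k /\ `|b| <= k) -> edge_ok s t0 t1 a b.
Proof.
rewrite /edge_ok; case: s t0 t1 => [] [] [] //= _; rewrite ?mul1r ?mulN1r;
  by case=> [[Ea ?]|[Ea ?]|Ea]; case=> [[Eb ?]|[Eb ?]|Eb]; lia.
Qed.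

Section Cycles.
Variables (G : sgraph) (tau : arrows G).
Local Notation V := 'I_(nv G).
Local Notation E := 'I_(ne G).
Implicit Types (R : {set V}) (e : E) (u v : V) (w : seq (E * V)).

Definition edge_in R e := ((ends e).1 \in R) && ((ends e).2 \in R).

Lemma edge_in_hend R e b : edge_in R e -> hend e b \in R.
Proof. by case/andP; case: b. Qed.

Lemma link_hend e b : link e (hend e b) (hend e (~~ b)).
Proof. by rewrite /link /hend; case: b; rewrite -surjective_pairing eqxx ?orbT. Qed.

Lemma link_hendP e u v : link e u v -> (exists b, hend e b = u) /\ (exists b, hend e b = v).
Proof.
by rewrite /link /hend => /orP[]/eqP->; split; [exists false|exists true|exists true|exists false].
Qed.

Lemma is_walk_cat u w1 w2 :
  is_walk u (w1 ++ w2) = is_walk u w1 && is_walk (last u (map snd w1)) w2.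
Proof. by elim: w1 u => [|[e v] w1 IH] u //=; rewrite IH andbA. Qed.

Lemma walk_vertex_hend u w x : is_walk u w -> w != [::] -> x \in u :: map snd w ->
  exists e b, e \in map fst w /\ hend e b = x.
Proof.
elim: w u => [|[e v] w IH] u //= /andP[uv vw] _.
have [[b1 h1] [b2 h2]] := link_hendP uv.
rewrite !inE => /or3P[/eqP->|/eqP->|xw]; [exists e, b1 | exists e, b2 |]; rewrite ?inE ?eqxx //.
have [e' [b [e'w <-]]] : exists e b, e \in map fst w /\ hend e b = x.
  by apply: IH vw _ _; [case: (w) xw | rewrite inE xw orbT].
by exists e', b; rewrite inE e'w orbT.
Qed.

Definition edge_set w := [set e | e \in map fst w].

Definition closed_walk_in R u w := closed_walk u w && all (fun p => edge_in R p.1) w.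

(* The new edge is inserted as a detour, there and back, at its endpoint on the walk. *)
Lemma closed_walk_in_splice R u w e b :
  closed_walk_in R u w -> edge_in R e -> hend e b \in u :: map snd w ->
  exists w', closed_walk_in R u w' /\ edge_set w' = e |: edge_set w.
Proof.
case/andP => /and3P[wn uw wu] wR eR; set z := hend e b; set y := hend e (~~ b).
have zy : link e z y := link_hend e b.
have yz : link e y z by rewrite /link orbC.
rewrite inE => /orP[/eqP zu|/mapP[[e0 z'] ew /= zz']].
  exists ((e, y) :: (e, u) :: w); split.
    by move: zy yz; rewrite /closed_walk_in /closed_walk /= zu => -> ->; rewrite uw eR wR wu.
  by apply/setP => x; rewrite !inE /= orbA orbb.
move: zz' uw wR wu; case/splitPr: ew => w1 w2 <- uw wR wu.
exists (w1 ++ (e0, z) :: (e, y) :: (e, z) :: w2); split.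
  move: uw wR wu; rewrite /closed_walk_in /closed_walk !is_walk_cat /= !all_cat /=.
  rewrite zy yz eR !map_cat !last_cat /=.
  by case/andP => -> /andP[-> ->] /andP[-> /andP[-> ->]] ->; case: (w1).
apply/setP => x; rewrite !inE !map_cat !mem_cat /= !inE.
by case: (x == e); case: (x == e0); rewrite ?orbT ?orbF.
Qed.

Definition balanced R := forall v e b, edge_in R e -> hend e b = v ->
  (exists e' b', [/\ edge_in R e', hend e' b' = v & tau e' b']) /\
  (exists e' b', [/\ edge_in R e', hend e' b' = v & ~~ tau e' b']).

(* Either an unused R-edge at a vertex of the walk can be spliced in, or the
   walk uses all R-edges at its vertices and balance makes it a cycle. *)
Lemma closed_walk_in_grow R u w : balanced R -> closed_walk_in R u w ->
  is_cycle tau u w \/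
  exists2 w', closed_walk_in R u w' & (#|edge_set w| < #|edge_set w'|)%N.
Proof.
move=> bal uwR.
case: (pickP [pred eb : E * bool | [&& edge_in R eb.1,
    hend eb.1 eb.2 \in u :: map snd w & eb.1 \notin map fst w]]) => [[e b]|saturated].
  case/and3P => /= eR ew new; right.
  have [w' [w'R Ew']] := closed_walk_in_splice uwR eR ew.
  by exists w'; rewrite // Ew' cardsU1 inE new.
left; case/andP: uwR => cw wR; split => // x xw; case/and3P: (cw) => wn uw _.
have [e [b [ew ex]]] := walk_vertex_hend uw wn xw.
have eR : edge_in R e by case/mapP: ew => p pw ->; exact: (allP wR p pw).
have used e' b' : edge_in R e' -> hend e' b' = x -> e' \in map fst w.
  by move=> e'R e'x; have := saturated (e', b'); rewrite /= e'R e'x xw /= => /negbT; rewrite negbK.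
have [[e1 [b1 [e1R e1x t1]]] [e2 [b2 [e2R e2x t2]]]] := bal x e b eR ex.
by split; [exists e1, b1 | exists e2, b2]; split; rewrite ?(used _ _ _ e1x) ?(used _ _ _ e2x).
Qed.

Lemma balanced_cycle R e0 : balanced R -> edge_in R e0 -> exists u w, is_cycle tau u w.
Proof.
move=> bal e0R; set u := (ends e0).1.
suff grow n w : (ne G - #|edge_set w| < n)%N -> closed_walk_in R u w ->
    exists u w, is_cycle tau u w.
  apply: (grow (ne G).+1 [:: (e0, (ends e0).2); (e0, u)]); first by rewrite ltnS leq_subr.
  rewrite /closed_walk_in /closed_walk /= /link -surjective_pairing eqxx /= e0R.
  by rewrite /u; case: (ends e0) => a b /=; rewrite eqxx orbT.
elim: n w => // n IH w lt uwR.
have [cyc|[w' w'R gt]] := closed_walk_in_grow bal uwR; first by exists u, w.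
by apply: IH w'R; have := subset_leq_card (subsetT (edge_set w')); rewrite cardsT card_ord; lia.
Qed.

End Cycles.

Section Colorings.
Variables (G : sgraph) (tau : arrows G).
Local Notation V := 'I_(nv G).
Local Notation E := 'I_(ne G).
Implicit Types (R : {set V}) (e : E) (v : V).

(* Colours are the integers of absolute value at most [cmax], the largest level
   needed, encoded in a finite type so that colorings can be counted. *)
Definition cmax := (nv G).+1.
Definition colour := 'I_cmax.*2.+1.
Definition cval (c : colour) : int := (c : nat)%:Z - cmax%:Z.
Definition colour_of (x : int) : colour := inord (absz (x + cmax%:Z)).

Lemma cvalK : cancel cval colour_of.
Proof.
by move=> c; apply: val_inj; rewrite /= /colour_of /cval inordK subrK //; have := ltn_ord c.
Qed.

Lemma colour_ofK x : (absz x <= cmax)%N -> cval (colour_of x) = x.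
Proof. by move=> xb; rewrite /cval /colour_of inordK; lia. Qed.

Definition coloring := {ffun V -> colour}.
Definition kval (ka : coloring) v : int := cval (ka v).

Lemma kvalK (ka : coloring) v x : kval ka v = x -> ka v = colour_of x.
Proof. by move=> <-; rewrite cvalK. Qed.

Definition sink_in R v :=
  [forall e, forall b, (edge_in R e && (hend e b == v)) ==> tau e b].
Definition source_in R v :=
  [forall e, forall b, (edge_in R e && (hend e b == v)) ==> ~~ tau e b].
Definition sinks R := [set v in R | sink_in R v].
Definition sources R := [set v in R | source_in R v].

Definition edge_valid (kap : V -> int) e :=
  edge_ok (sgn e) (tau e false) (tau e true) (kap (ends e).1) (kap (ends e).2).
Definition valid_in R (kap : V -> int) := [forall e, edge_in R e ==> edge_valid kap e].

Definition supported R (ka : coloring) := [forall v, (v \notin R) ==> (kval ka v == 0)].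
Definition bounded_by R k (ka : coloring) := [forall v in R, (absz (kval ka v) <= k)%N].
Definition covers R k (ka : coloring) :=
  all (fun j => [exists v in R, absz (kval ka v) == j]) (iota 1 k).

Definition exact R k := [pred ka : coloring |
  [&& supported R ka, valid_in R (kval ka), bounded_by R k ka & covers R k ka]].
Definition topped R k := [pred ka : coloring |
  [&& supported R ka, valid_in R (kval ka), bounded_by R k.+1 ka & covers R k ka]].
Definition top_pos R k (ka : coloring) := [set v in R | kval ka v == k.+1%:Z].
Definition top_neg R k (ka : coloring) := [set v in R | kval ka v == - k.+1%:Z].

Definition nexact R k := #|exact R k|.

Lemma bounded_byP R k (ka : coloring) v : bounded_by R k ka -> v \in R -> `|kval ka v| <= k%:Z.
Proof. by move=> /forallP /(_ v) /implyP kb /kb; lia. Qed.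

Lemma topped_sinks_sources R k (ka : coloring) : topped R k ka ->
  [/\ top_pos R k ka \subset sinks R, top_neg R k ka \subset sources R
    & [disjoint top_pos R k ka & top_neg R k ka]].
Proof.
case/and4P => _ kaR kab _.
have top e b : edge_in R e -> [/\ kval ka (hend e b) = k.+1%:Z -> tau e b
                                & kval ka (hend e b) = - k.+1%:Z -> ~~ tau e b].
  move=> eR; have /andP[e1 e2] := eR.
  have [t1 t2 t3 t4] :=
    edge_ok_top (implyP (forallP kaR e) eR) (bounded_byP kab e1) (bounded_byP kab e2).
  by case: b.
split.
- apply/subsetP => v; rewrite !inE => /andP[vR /eqP kv]; rewrite vR.
  apply/forallP => e; apply/forallP => b; apply/implyP => /andP[eR /eqP ev].
  by case: (top e b eR) => + _; apply; rewrite ev.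
- apply/subsetP => v; rewrite !inE => /andP[vR /eqP kv]; rewrite vR.
  apply/forallP => e; apply/forallP => b; apply/implyP => /andP[eR /eqP ev].
  by case: (top e b eR) => _; apply; rewrite ev.
- by apply/pred0P => v /=; rewrite !inE; case: (v \in R) => //=; apply/negP => /andP[/eqP -> ]; lia.
Qed.

Lemma edge_valid_eq (k1 k2 : V -> int) e :
  k1 (ends e).1 = k2 (ends e).1 -> k1 (ends e).2 = k2 (ends e).2 ->
  edge_valid k1 e = edge_valid k2 e.
Proof. by rewrite /edge_valid => -> ->. Qed.

End Colorings.

Section Fiber.
Variables (G : sgraph) (tau : arrows G).
Local Notation V := 'I_(nv G).
Variables (R : {set V}) (k : nat) (P0 M0 : {set V}).
Local Notation B := (P0 :|: M0).
Local Notation coloring := (coloring G).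
Local Notation kval := (@kval G).

Definition clear_top (ka : coloring) : coloring :=
  [ffun v => if v \in B then colour_of G 0 else ka v].
Definition raise_top (ka : coloring) : coloring :=
  [ffun v => if v \in P0 then colour_of G k.+1%:Z
             else if v \in M0 then colour_of G (- k.+1%:Z) else ka v].

Lemma kval_clear_top ka v : kval (clear_top ka) v = if v \in B then 0 else kval ka v.
Proof. by rewrite /kval ffunE; case: ifP => // _; rewrite colour_ofK. Qed.

Hypothesis k_lt : (k < cmax G)%N.

Lemma kval_raise_top ka v : kval (raise_top ka) v =
  if v \in P0 then k.+1%:Z else if v \in M0 then - k.+1%:Z else kval ka v.
Proof. by rewrite /kval ffunE; do 2?case: ifP => _; rewrite ?colour_ofK //; lia. Qed.

Lemma clear_top_exact ka : topped tau R k ka ->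
  top_pos R k ka = P0 -> top_neg R k ka = M0 -> exact tau (R :\: B) k (clear_top ka).
Proof.
move=> /[dup] /and4P[kaS kaV kab kac] ka_top EP EM.
have inB v : v \in R -> (v \in B) = (`|kval ka v| == k.+1%:Z).
  move=> vR; rewrite -EP -EM !inE vR /=.
  by have := bounded_byP kab vR; move: (kval ka v) => x; lia.
apply/and4P; split.
- apply/forallP => v; apply/implyP; rewrite kval_clear_top in_setD negb_and negbK.
  by case: ifP => //= _ vR; exact: (implyP (forallP kaS v) vR).
- apply/forallP => e; apply/implyP => /andP[]; rewrite !in_setD => /andP[n1 r1] /andP[n2 r2].
  rewrite (@edge_valid_eq _ _ _ (kval ka)) ?kval_clear_top ?(negbTE n1) ?(negbTE n2) //.
  by apply: (implyP (forallP kaV e)); rewrite /edge_in r1 r2.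
- apply/forallP => v; apply/implyP; rewrite in_setD => /andP[vB vR].
  rewrite kval_clear_top (negbTE vB); move: vB; rewrite inB //.
  by have := bounded_byP kab vR; move: (kval ka v) => x; lia.
- apply/allP => j jk; have /existsP[v /andP[vR /eqP vj]] := allP kac j jk.
  move: jk; rewrite mem_iota => /andP[j1 j2].
  have vB : v \notin B by rewrite inB //; move: vj j1 j2; move: (kval ka v) => x; lia.
  by apply/existsP; exists v; rewrite in_setD vB vR kval_clear_top (negbTE vB) vj eqxx.
Qed.

Hypothesis tau_orient : is_orientation tau.
Hypotheses (P0_sinks : P0 \subset sinks tau R) (M0_sources : M0 \subset sources tau R).
Hypothesis P0M0 : [disjoint P0 & M0].

Lemma top_sub_R : B \subset R.
Proof.
by rewrite subUset; apply/andP; split; apply/subsetP => v;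
  [move/(subsetP P0_sinks) | move/(subsetP M0_sources)]; rewrite inE => /andP[].
Qed.

Lemma raise_top_at_edge ka e b : exact tau (R :\: B) k ka -> edge_in R e ->
  [\/ kval (raise_top ka) (hend e b) = k.+1%:Z /\ tau e b,
      kval (raise_top ka) (hend e b) = - k.+1%:Z /\ ~~ tau e b
    | `|kval (raise_top ka) (hend e b)| <= k%:Z].
Proof.
case/and4P => _ _ kab _ eR; have xR := edge_in_hend b eR.
rewrite kval_raise_top; case: ifP => xP.
  apply: Or31; split => //; have := subsetP P0_sinks _ xP; rewrite inE.
  by case/andP => _ /forallP /(_ e) /forallP /(_ b) /implyP; apply; rewrite eR eqxx.
case: ifP => xM.
  apply: Or32; split => //; have := subsetP M0_sources _ xM; rewrite inE.
  by case/andP => _ /forallP /(_ e) /forallP /(_ b) /implyP; apply; rewrite eR eqxx.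
by apply: Or33; apply: bounded_byP kab _; rewrite !inE xP xM xR.
Qed.

Lemma raise_top_topped ka : exact tau (R :\: B) k ka -> topped tau R k (raise_top ka).
Proof.
move=> /[dup] ka_ex /and4P[kaS kaV kab kac].
have BR := subsetP top_sub_R.
have outB v : v \notin B -> v \in R -> (`|kval ka v| <= k%:Z)%R.
  by move=> vB vR; apply: bounded_byP kab _; rewrite in_setD vB vR.
apply/and4P; split.
- apply/forallP => v; apply/implyP => vR; rewrite kval_raise_top.
  have vB : v \notin B by apply: contra vR => /BR.
  move: vB; rewrite inE negb_or => /andP[/negbTE -> /negbTE ->].
  by apply: (implyP (forallP kaS v)); rewrite in_setD negb_and vR orbT.
- apply/forallP => e; apply/implyP => eR.
  have [eB|] := boolP (((ends e).1 \in B) || ((ends e).2 \in B)); last first.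
    rewrite negb_or => /andP[n1 n2].
    rewrite (@edge_valid_eq _ _ _ (kval ka)) ?kval_raise_top; last 2 first.
    + by move: n1; rewrite inE negb_or => /andP[/negbTE -> /negbTE ->].
    + by move: n2; rewrite inE negb_or => /andP[/negbTE -> /negbTE ->].
    by apply: (implyP (forallP kaV e)); rewrite /edge_in !in_setD n1 n2; case/andP: eR => -> ->.
  apply: (edge_ok_lift (tau_orient e)
    (raise_top_at_edge false ka_ex eR) (raise_top_at_edge true ka_ex eR)).
  have top x : x \in B -> `|kval (raise_top ka) x| = k.+1%:Z.
    by rewrite kval_raise_top inE; do 2?case: ifP => _ //=; lia.
  by case/orP: eB => /top xB [h1 h2]; [move: h1 | move: h2]; rewrite xB; lia.
- apply/forallP => v; apply/implyP => vR; rewrite kval_raise_top.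
  case: ifP => vP; first lia.
  case: ifP => vM; first lia.
  by have := outB v; rewrite inE vP vM => /(_ isT vR); lia.
- apply/allP => j jk; have /existsP[v /andP[vRB /eqP vj]] := allP kac j jk.
  move: vRB; rewrite !inE negb_or => /andP[/andP[/negbTE vP /negbTE vM] vR].
  by apply/existsP; exists v; rewrite vR kval_raise_top vP vM vj eqxx.
Qed.

Lemma top_raise_top ka : exact tau (R :\: B) k ka ->
  top_pos R k (raise_top ka) = P0 /\ top_neg R k (raise_top ka) = M0.
Proof.
case/and4P => _ _ kab _; have BR := subsetP top_sub_R.
have rest v : v \in R -> v \notin P0 -> v \notin M0 -> `|kval ka v| <= k%:Z.
  by move=> vR vP vM; apply: bounded_byP kab _; rewrite !inE negb_or vP vM vR.
split; apply/setP => v; rewrite !inE kval_raise_top.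
- case: ifP => vP; first by rewrite BR ?inE ?vP // eqxx.
  case: ifP => vM; first by rewrite BR ?inE ?vM ?orbT //=; lia.
  by case: (boolP (v \in R)) => //= vR; have := rest v vR (negbT vP) (negbT vM); lia.
- case: ifP => vP; first by rewrite BR ?inE ?vP //= (disjointFr P0M0 vP); lia.
  case: ifP => vM; first by rewrite BR ?inE ?vM ?orbT ?eqxx.
  by case: (boolP (v \in R)) => //= vR; have := rest v vR (negbT vP) (negbT vM); lia.
Qed.

Lemma card_topped_fiber :
  #|[pred ka | topped tau R k ka && (top_pos R k ka == P0) && (top_neg R k ka == M0)]|
  = nexact tau (R :\: B) k.
Proof.
apply: (card_in_bij (f := clear_top) (g := raise_top)).
- by move=> ka; rewrite inE => /andP[/andP[ka_top /eqP EP] /eqP EM]; apply: clear_top_exact.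
- move=> ka ka_ex; have [EP EM] := top_raise_top ka_ex.
  by rewrite inE raise_top_topped // EP EM !eqxx.
- move=> ka; rewrite inE => /andP[/andP[_ /eqP EP] /eqP EM].
  apply/ffunP => v; rewrite !ffunE inE.
  case: ifP => vP; first by apply/esym/kvalK; move: vP; rewrite -EP inE => /andP[_ /eqP].
  case: ifP => vM; first by apply/esym/kvalK; move: vM; rewrite -EM inE => /andP[_ /eqP].
  by rewrite vP vM.
- move=> ka /and4P[kaS _ _ _]; apply/ffunP => v; rewrite !ffunE.
  case: ifP => vB; last first.
    by move: vB; rewrite inE => /negbT; rewrite negb_or => /andP[/negbTE -> /negbTE ->].
  by apply/esym/kvalK/eqP; apply: (implyP (forallP kaS v)); rewrite in_setD vB.
Qed.

End Fiber.

Section Counting.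
Variables (G : sgraph) (tau : arrows G).
Local Notation V := 'I_(nv G).
Hypothesis tau_orient : is_orientation tau.
Implicit Types (R : {set V}) (k : nat).

Lemma sum_topped (Rg : nmodType) R k (F : {set V} -> {set V} -> Rg) : (k < cmax G)%N ->
  \sum_(ka in topped tau R k) F (top_pos R k ka) (top_neg R k ka) =
  \sum_(P0 : {set V} | P0 \subset sinks tau R)
    \sum_(M0 : {set V} | (M0 \subset sources tau R) && [disjoint P0 & M0])
      F P0 M0 *+ nexact tau (R :\: (P0 :|: M0)) k.
Proof.
move=> k_lt; rewrite pair_big_dep (partition_big (fun ka => (top_pos R k ka, top_neg R k ka))
  (fun PM => (PM.1 \subset sinks tau R) && (PM.2 \subset sources tau R) && [disjoint PM.1 & PM.2])).
  apply: eq_big => [[P0 M0]|[P0 M0] /= /andP[/andP[sP sM] dPM]]; first by rewrite /= andbA.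
  rewrite (eq_bigr (fun=> F P0 M0)) => [|ka /andP[_ /eqP[-> ->]] //].
  rewrite sumr_const -card_topped_fiber //; congr (_ *+ _).
  by apply: eq_card => ka; rewrite unfold_in /= xpair_eqE andbA.
by move=> ka /topped_sinks_sources[-> -> ->].
Qed.

Lemma exact_succE R k ka :
  (ka \in exact tau R k.+1) =
  (ka \in topped tau R k) && (top_pos R k ka :|: top_neg R k ka != set0).
Proof.
have top_hit : [exists v in R, absz (kval ka v) == k.+1] =
               (top_pos R k ka :|: top_neg R k ka != set0).
  apply/existsP/set0Pn => [[v /andP[vR /eqP kv]]|[v]].
    by exists v; rewrite !inE vR /=; move: kv; move: (kval ka v) => x; lia.
  by rewrite !inE => /orP[] /andP[vR /eqP kv]; exists v; rewrite vR kv /=.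
by rewrite !inE /= /covers -addn1 iotaD all_cat /= andbT add1n -/(covers R k ka) top_hit !andbA.
Qed.

Lemma nexact_succ (Rg : pzRingType) R k : (k < cmax G)%N ->
  (nexact tau R k.+1)%:R = \sum_(P0 : {set V} | P0 \subset sinks tau R)
    \sum_(M0 : {set V} | M0 \subset sources tau R)
      ([disjoint P0 & M0] && (P0 :|: M0 != set0))%:R * (nexact tau (R :\: (P0 :|: M0)) k)%:R :> Rg.
Proof.
move=> k_lt; have -> : nexact tau R k.+1 =
    (\sum_(ka in topped tau R k) (top_pos R k ka :|: top_neg R k ka != set0))%N.
  rewrite /nexact -sum1_card (eq_bigl _ _ (exact_succE R k)) big_mkcondr /=.
  by apply: eq_bigr => ka _; case: ifP.
rewrite natr_sum (sum_topped R (fun P0 M0 => (P0 :|: M0 != set0)%:R : Rg) k_lt).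
apply: eq_bigr => P0 _; rewrite big_mkcondr; apply: eq_bigr => M0 _ /=.
by case: [disjoint P0 & M0]; rewrite ?mulr0n ?mul0r // mulr_natr.
Qed.
End Counting.

Section Euler.
Variables (G : sgraph) (tau : arrows G).
Local Notation V := 'I_(nv G).
Implicit Types (R : {set V}) (k : nat).

Lemma nexact_gt R k : (#|R| < k)%N -> nexact tau R k = 0%N.
Proof.
move=> Rk; apply: eq_card0 => ka; apply/negP => /and4P[_ _ _ kac].
have sub : {subset iota 1 k <= [seq absz (kval ka v) | v <- enum R]}.
  by move=> j /(allP kac) /existsP[v /andP[vR /eqP <-]]; apply: map_f; rewrite mem_enum.
by have := uniq_leq_size (iota_uniq 1 k) sub; rewrite size_iota size_map -cardE leqNgt Rk.
Qed.

Lemma nexact0 R : nexact tau R 0 = ~~ [exists e, edge_in R e].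
Proof.
set ka0 : coloring G := [ffun => colour_of G 0].
have kval0 v : kval ka0 v = 0 by rewrite /kval ffunE colour_ofK.
have only0 ka : exact tau R 0 ka -> ka = ka0.
  case/and4P => kaS _ kab _; apply/ffunP => v; rewrite [RHS]ffunE; apply: kvalK.
  have [vR|vR] := boolP (v \in R); first by have := bounded_byP kab vR; lia.
  exact/eqP/(implyP (forallP kaS v) vR).
have [[e eR]|no_edge] := existsP; last first.
  rewrite /nexact (eq_card (B := pred1 ka0)) ?card1 // => ka.
  apply/idP/eqP => [/only0 //|->]; rewrite inE; apply/and4P; split => //.
  - by apply/forallP => v; rewrite kval0 implybT.
  - by apply/forallP => e; apply/implyP => eR; case: no_edge; exists e.
  - by apply/forallP => v; rewrite kval0 implybT.
apply: eq_card0 => ka; apply/negP => /[dup] /only0 -> /and4P[_ ka0V _ _].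
by have := implyP (forallP ka0V e) eR; rewrite /edge_valid /edge_ok !kval0 mulr0 eqxx.
Qed.

Lemma sinks_sources_no_edge R : ~~ [exists e, edge_in R e] ->
  sinks tau R = R /\ sources tau R = R.
Proof.
move/existsPn => no_edge; split; apply/setP => v; rewrite !inE andb_idr // => _;
  by apply/forallP => e; apply/forallP => b; rewrite (negbTE (no_edge e)).
Qed.

(* If sinks and sources of [R] agree, every vertex touching an [R]-edge is
   neither, so it has both an incoming and an outgoing arrow inside [R]. *)
Lemma sinks_sources_edge R e : acyclic tau -> edge_in R e -> sinks tau R != sources tau R.
Proof.
move=> Hac eR; apply/negP => /eqP same.
suff bal : balanced tau R by have [u [w /Hac]] := balanced_cycle bal eR.
move=> v e' b e'R e'v; have vR : v \in R by rewrite -e'v edge_in_hend.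
have arrow_at (t : bool) : exists e1 b1, [/\ edge_in R e1, hend e1 b1 = v & tau e1 b1 = t].
  have [/existsP[e1 /existsP[b1 /and3P[? /eqP ? /eqP ?]]]|/existsPn none] :=
    boolP [exists e1, exists b1, [&& edge_in R e1, hend e1 b1 == v & tau e1 b1 == t]].
    by exists e1, b1.
  have not_t e1 b1 : edge_in R e1 && (hend e1 b1 == v) -> tau e1 b1 = ~~ t.
    case/andP => e1R e1v; have /existsPn/(_ b1) := none e1.
    by rewrite e1R e1v /=; case: (tau e1 b1); case: (t).
  clear none.
  suff : v \in sinks tau R /\ v \in sources tau R.
    case=> /setIdP[_ /forallP/(_ e')/forallP/(_ b)] + /setIdP[_ /forallP/(_ e')/forallP/(_ b)].
    by rewrite e'R e'v eqxx /= => ->.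
  have : v \in (if t then sources tau R else sinks tau R).
    by case: t not_t => not_t; rewrite inE vR; apply/forallP => e1; apply/forallP => b1;
      apply/implyP => /not_t ->.
  by case: t not_t => _ vin; split; rewrite ?same // -?same.
have [e1 [b1 [? ? t1]]] := arrow_at true; have [e2 [b2 [? ? t2]]] := arrow_at false.
by split; [exists e1, b1 | exists e2, b2]; rewrite ?t1 ?t2.
Qed.

Definition exact_euler (Rg : pzRingType) R : Rg :=
  \sum_(k < (nv G).+1) (-1) ^+ (#|R| + k) * (nexact tau R k)%:R.

Lemma exact_euler_trunc (Rg : pzRingType) R : (#|R| < nv G)%N ->
  \sum_(k < nv G) (-1) ^+ (#|R| + k) * (nexact tau R k)%:R = exact_euler Rg R.
Proof. by move=> R_lt; rewrite /exact_euler big_ord_recr /= nexact_gt // mulr0 addr0. Qed.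

Lemma sinks_sub R : sinks tau R \subset R.
Proof. by apply/subsetP => v; rewrite inE => /andP[]. Qed.

Lemma sources_sub R : sources tau R \subset R.
Proof. by apply/subsetP => v; rewrite inE => /andP[]. Qed.

Hypotheses (tau_orient : is_orientation tau) (tau_acyclic : acyclic tau).

Lemma exact_euler_step (Rg : comPzRingType) R :
  (forall R', (#|R'| < #|R|)%N -> exact_euler Rg R' = 1) -> exact_euler Rg R = 1.
Proof.
move=> IH; have R_le : (#|R| <= nv G)%N by rewrite -[X in (_ <= X)%N]card_ord max_card.
have peel (P0 M0 : {set V}) : P0 \subset sinks tau R -> M0 \subset sources tau R ->
    [disjoint P0 & M0] -> P0 :|: M0 != set0 ->
    \sum_(k < nv G) (-1) ^+ (#|R| + k.+1) * (nexact tau (R :\: (P0 :|: M0)) k)%:R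
    = - (-1) ^+ (#|P0| + #|M0|) :> Rg.
  move=> sP sM dPM PM0; set B := P0 :|: M0.
  have BR : B \subset R.
    by rewrite subUset (subset_trans sP (sinks_sub R)) (subset_trans sM (sources_sub R)).
  have cB : #|B| = (#|P0| + #|M0|)%N by rewrite cardsU (disjoint_setI0 dPM) cards0 subn0.
  have cRB : (#|R :\: B| + #|B| = #|R|)%N by rewrite -(cardsID B R) (setIidPr BR) addnC.
  have B_gt0 : (0 < #|B|)%N by rewrite card_gt0.
  have lt : (#|R :\: B| < #|R|)%N by lia.
  transitivity (- (-1) ^+ (#|P0| + #|M0|) * exact_euler Rg (R :\: B)); last by rewrite IH ?mulr1.
  rewrite -exact_euler_trunc; last by lia.
  rewrite mulr_sumr; apply: eq_bigr => k _; rewrite mulrA -cB -cRB; congr (_ * _).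
  by rewrite addnS exprS !exprD; ring.
rewrite /exact_euler big_ord_recl addn0.
transitivity ((-1) ^+ #|R| * (nexact tau R 0)%:R -
  \sum_(P0 : {set V} | P0 \subset sinks tau R) \sum_(M0 : {set V} | M0 \subset sources tau R)
    ([disjoint P0 & M0] && (P0 :|: M0 != set0))%:R * (-1 : Rg) ^+ (#|P0| + #|M0|)).
  congr (_ + _).
  under eq_bigr => k _ do
    rewrite lift0 (nexact_succ tau_orient Rg R (leqW (ltn_ord k))) mulr_sumr.
  rewrite exchange_big -sumrN; apply: eq_bigr => P0 sP.
  under eq_bigr => k _ do rewrite mulr_sumr.
  rewrite exchange_big -sumrN; apply: eq_bigr => M0 sM.
  have [/andP[dPM PM0]|_] := boolP ([disjoint P0 & M0] && (P0 :|: M0 != set0)); last first.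
    by rewrite mul0r oppr0 big1 // => k _; rewrite mul0r mulr0.
  by rewrite mul1r -(peel P0 M0) //; apply: eq_bigr => k _; rewrite mul1r.
rewrite sum_disjoint_nonempty_subsets_sign nexact0 opprB addrCA.
have [/existsP[e eR]|no_edge] := boolP [exists e, edge_in R e].
  by rewrite (negbTE (sinks_sources_edge tau_acyclic eR)) /= mulr0 mul0r subr0 addr0.
have [-> ->] := sinks_sources_no_edge no_edge.
by rewrite eqxx mulr1 mul1r subrr addr0.
Qed.

Theorem exact_euler1 (Rg : comPzRingType) R : exact_euler Rg R = 1.
Proof.
elim: {R}_.+1 {-2}R (ltnSn #|R|) => // n IH R R_lt.
by apply: exact_euler_step => R' R'_lt; apply: IH; apply: leq_trans R'_lt _.
Qed.

End Euler.

Definition covers_seq (k : nat) (m : monomial) :=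
  all (fun j => j \in [seq absz x | x <- m]) (iota 1 k).

(* A coloring with colour list [m] contributes at level [k] when its colours
   lie in [-k, k+1] and their absolute values cover [1..k]; the vertices
   coloured [k+1] are then sinks, and each of them contributes a factor [X - 1]. *)
Definition level_weight (n k : nat) (m : monomial) : {poly rat} :=
  (all (fun x => (absz x <= k)%N || (x == k.+1%:Z)) m && covers_seq k m)%:R
  * ((-1) ^+ (n - count_mem k.+1%:Z m + k) * ('X - 1) ^+ count_mem k.+1%:Z m).

Definition monomial_weight (n : nat) (m : monomial) : {poly rat} :=
  \sum_(k < n.+1) level_weight n k m.

Lemma monomial_weight_perm n m1 m2 :
  perm_eq m1 m2 -> monomial_weight n m1 = monomial_weight n m2.
Proof.
move=> m12; apply: eq_bigr => k _; rewrite /level_weight (perm_all _ m12) (permP m12).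
rewrite /covers_seq (eq_all (a2 := fun j => j \in [seq absz x | x <- m2])) // => j.
by rewrite (perm_mem (perm_map _ m12)).
Qed.

Section SinkWeight.
Variables (G : sgraph) (tau : arrows G).
Local Notation V := 'I_(nv G).
Local Notation colors ka := [seq kval ka v | v <- enum V].

Lemma valid_inT (kap : V -> int) : valid_in tau setT kap = Defs.proper kap && preserves tau kap.
Proof.
apply/forallP/andP => [ok|[/forallP kP /forallP kpres] e].
  have okT e : edge_valid tau kap e by apply: (implyP (ok e)); rewrite /edge_in !in_setT.
  by split; apply/forallP => e; have /and3P[? ? ?] := okT e; last apply/forallP => -[].
rewrite /edge_in !in_setT /=; apply/and3P.
by split; [exact: kP | exact: (forallP (kpres e) false) | exact: (forallP (kpres e) true)].
Qed.

Lemma card_sinksT : #|sinks tau setT| = #|[pred v | is_sink tau v]|.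
Proof.
apply: eq_card => v; rewrite !inE /=; apply: eq_forallb => e; apply: eq_forallb => b.
by rewrite /edge_in !in_setT.
Qed.

Lemma count_colors_top k (ka : coloring G) :
  count_mem k.+1%:Z (colors ka) = #|top_pos setT k ka|.
Proof. by rewrite count_map cardE size_filter enumT; apply: eq_count => v; rewrite !inE. Qed.

Lemma level_condE k (ka : coloring G) : valid_in tau setT (kval ka) ->
  all (fun x => (absz x <= k)%N || (x == k.+1%:Z)) (colors ka) && covers_seq k (colors ka)
  = (ka \in topped tau setT k) && (top_neg setT k ka == set0).
Proof.
move=> kaV; rewrite inE /= kaV /= andbC.
have -> : supported setT ka by apply/forallP => v; rewrite in_setT.
have -> : covers_seq k (colors ka) = covers setT k ka.
  apply: eq_all => j; rewrite -map_comp; apply/mapP/existsP => [[v _ ->]|[v /andP[_ /eqP <-]]].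
    by exists v; rewrite in_setT eqxx.
  by exists v; rewrite ?mem_enum.
suff -> : all (fun x => (absz x <= k)%N || (x == k.+1%:Z)) (colors ka)
           = bounded_by setT k.+1 ka && (top_neg setT k ka == set0).
  by case: covers; case: bounded_by.
rewrite all_map; apply/allP/andP => [top_pos_only|[/forallP kab /eqP neg0] v _ /=].
  split; [apply/forallP => v; apply/implyP => _ | apply/eqP/setP => v; rewrite !inE /=];
    by have /= := top_pos_only v (mem_enum _ v); lia.
have := implyP (kab v); have : v \notin top_neg setT k ka by rewrite neg0 in_set0.
by rewrite !inE /=; lia.
Qed.

Hypotheses (tau_orient : is_orientation tau) (tau_acyclic : acyclic tau).

Lemma sum_level_weight k : (k < (nv G).+1)%N ->
  \sum_(ka : coloring G | valid_in tau setT (kval ka)) level_weight (nv G) k (colors ka)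
  = \sum_(P0 : {set V} | P0 \subset sinks tau setT)
      ('X - 1) ^+ #|P0| * ((-1) ^+ (#|setT :\: P0| + k) * (nexact tau (setT :\: P0) k)%:R).
Proof.
move=> k_lt; pose F (P M : {set V}) : {poly rat} :=
  (M == set0)%:R * ((-1) ^+ (nv G - #|P| + k) * ('X - 1) ^+ #|P|).
transitivity (\sum_(ka in topped tau setT k) F (top_pos setT k ka) (top_neg setT k ka)).
  rewrite big_mkcond [RHS]big_mkcond; apply: eq_bigr => ka _ /=.
  have [kaV|kaV] := ifPn; last by rewrite inE /= (negbTE kaV) andbF.
  rewrite /level_weight level_condE // count_colors_top /F.
  by case: (ka \in topped _ _ _) => //=; rewrite mul0r.
rewrite (sum_topped tau_orient setT F k_lt); apply: eq_bigr => P0 _.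
rewrite (bigD1 set0) /=; last by rewrite sub0set disjoints_subset setC0 subsetT.
rewrite big1 => [|M0 /andP[_ /negbTE M0n0]]; last by rewrite /F M0n0 mul0r mul0rn.
have -> : #|setT :\: P0| = (nv G - #|P0|)%N.
  by have := cardsC P0; rewrite card_ord setTD; lia.
by rewrite addr0 /F eqxx mul1r setU0 mulrA mulr_natr; congr (_ *+ _); apply: mulrC.
Qed.

Lemma sum_monomial_weight :
  \sum_(ka : coloring G | valid_in tau setT (kval ka)) monomial_weight (nv G) (colors ka)
  = 'X ^+ #|sinks tau setT|.
Proof.
rewrite exchange_big /= (eq_bigr _ (fun k _ => sum_level_weight (ltn_ord k))) exchange_big /=.
rewrite -[X in X ^+ _](addrNK 1) [_ - 1 + 1]addrC -sum_subsets_exp; apply: eq_bigr => P0 _.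
have := exact_euler1 tau_orient tau_acyclic {poly rat} (setT :\: P0).
by rewrite -mulr_sumr /exact_euler => ->; rewrite mulr1.
Qed.

End SinkWeight.

Definition sorted_monomials (n : nat) : seq monomial :=
  undup [seq sort <=%O [seq (c i : nat)%:Z - n.+1%:Z | i <- enum 'I_n]
        | c : {ffun 'I_n -> 'I_n.+1.*2.+1} <- enum {ffun 'I_n -> 'I_n.+1.*2.+1}].

Lemma sorted_monomials_size n m : m \in sorted_monomials n -> size m = n.
Proof. by rewrite mem_undup => /mapP[c _ ->]; rewrite size_sort size_map size_enum_ord. Qed.

Lemma sorted_monomials_bound n m : m \in sorted_monomials n -> {in m, forall x, absz x <= n.+1}%N.
Proof.
rewrite mem_undup => /mapP[c _ ->] x; rewrite mem_sort => /mapP[i _ ->].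
by have := ltn_ord (c i); move: (c i : nat); rewrite -addnn; lia.
Qed.

Lemma sorted_monomials_sorted n m : m \in sorted_monomials n -> sort <=%O m = m.
Proof. by rewrite mem_undup => /mapP[c _ ->]; rewrite sort_le_id ?sort_le_sorted. Qed.

Definition sink_functional (n : nat) (f : series) : {poly rat} :=
  \sum_(m <- sorted_monomials n) f m *: monomial_weight n m.

Lemma sink_functional_linear n a f g :
  sink_functional n (fun m => a * f m + g m) = a *: sink_functional n f + sink_functional n g.
Proof.
by rewrite /sink_functional scaler_sumr -big_split; apply: eq_bigr => m _; rewrite scalerDl scalerA.
Qed.

Section Chromatic.
Variable P : signed_poset.
Local Notation G := (sp_graph P).
Local Notation tau := (@sp_tau P).
Local Notation V := 'I_(nv G).
Local Notation colors ka := [seq kval ka v | v <- enum V].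

Lemma Ycoef_colorings (m : monomial) : {in m, forall x, absz x <= cmax G}%N ->
  Ycoef P m = #|[pred ka : coloring G | valid_in tau setT (kval ka) && perm_eq (colors ka) m]|.
Proof.
move=> m_le.
pose F (k : {ffun V -> seq_sub m}) : coloring G := [ffun v => colour_of G (ssval (k v))].
have kvalF k : kval (F k) =1 (fun v => ssval (k v)).
  by move=> v; rewrite /kval ffunE colour_ofK // m_le // (ssvalP (k v)).
have F_inj : injective F.
  by move=> k1 k2 Ek; apply/ffunP => v; apply: val_inj; rewrite /= -!kvalF Ek.
have validF k : valid_in tau setT (kval (F k)) =
    Defs.proper (fun v => ssval (k v)) && preserves tau (fun v => ssval (k v)).
  rewrite valid_inT; congr (_ && _); apply: eq_forallb => e; rewrite ?kvalF //.
  by apply: eq_forallb => b; rewrite !kvalF.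
rewrite /Ycoef -(card_imset _ F_inj); apply: eq_card => ka.
apply/imsetP/idP => [[k + ->]|]; first by rewrite !inE /= validF (eq_map (kvalF k)) andbA.
rewrite inE => /andP[kaV kam].
have kam_in v : kval ka v \in m by rewrite -(perm_mem kam) map_f ?mem_enum.
pose k := [ffun v => SeqSub (kam_in v)].
have Fk : F k = ka by apply/ffunP => v; rewrite !ffunE /= cvalK.
exists k => //; rewrite inE /= andbA -validF Fk kaV.
by rewrite -(eq_map (kvalF k)) Fk.
Qed.

(* Each valid coloring is counted once, at the sorted list of its colours. *)
Lemma sink_functional_YP : sink_functional (nv G) (YP P) = 'X^(nsinks P).
Proof.
rewrite /nsinks -card_sinksT -(sum_monomial_weight (@sp_orient P) (@sp_acyclic P)).
rewrite /sink_functional big_seq.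
under eq_bigr => m mM.
  rewrite /YP (Ycoef_colorings (sorted_monomials_bound mM)) scaler_nat -sumr_const big_mkcondl.
  over.
rewrite /= -big_seq; under eq_bigr => m _ do rewrite big_mkcond /=.
rewrite exchange_big /= [RHS]big_mkcond; apply: eq_bigr => ka _.
have [kaV|_] := ifPn; last by rewrite big1 // => m _; case: ifP.
have sortM : sort <=%O (colors ka) \in sorted_monomials (nv G).
  by rewrite mem_undup; apply: map_f; rewrite mem_enum.
rewrite (bigD1_seq _ sortM (undup_uniq _)) /= big_seq_cond big1 ?addr0; last first.
  move=> m /andP[mM /negP m_sort]; case: ifPn => // ka_m; case: m_sort; apply/eqP.
  by rewrite -(sorted_monomials_sorted mM); apply/perm_sort_leP; rewrite perm_sym.
by rewrite perm_sym perm_sort perm_refl; apply: monomial_weight_perm; rewrite perm_sort perm_refl.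
Qed.

Lemma Ycoef_size m : size m != nv G -> Ycoef P m = 0%N.
Proof.
move=> m_neq; apply: eq_card0 => k; apply/negP; rewrite inE /= => /and3P[_ _ /perm_size].
by rewrite size_map size_enum_ord => /esym/eqP; rewrite (negbTE m_neq).
Qed.

Lemma sink_functional_YP_neq n : n != nv G -> sink_functional n (YP P) = 0.
Proof.
move=> n_neq; rewrite /sink_functional big_seq big1 // => m mM.
by rewrite /YP Ycoef_size ?scale0r // (sorted_monomials_size mM).
Qed.

End Chromatic.

Definition support_below (f : series) (D : nat) := forall m : monomial, (D <= size m)%N -> f m = 0.

Lemma support_below_YP (P : signed_poset) : support_below (YP P) (nv (sp_graph P)).+1.
Proof. by move=> m m_gt; rewrite /YP Ycoef_size // neq_ltn m_gt orbT. Qed.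

Lemma inY_support_below f : inY f -> exists D, support_below f D.
Proof.
case=> s ->; elim: s => [|p s [D sD]]; first by exists 0%N => m _; rewrite big_nil.
exists (maxn D (nv (sp_graph p.2)).+1) => m; rewrite geq_max big_cons => /andP[Dm pm].
by rewrite sD // support_below_YP // mulr0 addr0.
Qed.

Lemma sink_functional_support_below f D n :
  support_below f D -> (D <= n)%N -> sink_functional n f = 0.
Proof.
move=> fD Dn; rewrite /sink_functional big_seq big1 // => m mM.
by rewrite fD ?scale0r // (sorted_monomials_size mM).
Qed.

(* The choice of the bound does not matter (see [phiE]); [0] is a junk value
   for series of unbounded support. *)
Definition support_bound (f : series) : nat := epsilon (inhabits 0%N) (support_below f).

Definition phi (f : series) : {poly rat} := \sum_(n < support_bound f) sink_functional n f.

Lemma phiE f D : support_below f D -> phi f = \sum_(n < D) sink_functional n f.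
Proof.
move=> fD; have fB : support_below f (support_bound f) := epsilon_spec _ _ (ex_intro _ D fD).
suff widen D1 D2 : support_below f D1 -> (D1 <= D2)%N ->
    \sum_(n < D2) sink_functional n f = \sum_(n < D1) sink_functional n f.
  by rewrite /phi; case: (leqP (support_bound f) D) => [/(widen _ _ fB)|/ltnW/(widen _ _ fD)].
move=> fD1 le12; rewrite (big_ord_widen _ (sink_functional^~ f) le12).
rewrite (bigID (fun n : 'I_D2 => (n < D1)%N)) /=.
by rewrite [X in _ + X]big1 ?addr0 // => n; rewrite -leqNgt; apply: sink_functional_support_below.
Qed.

Theorem mainTheorem7 :
  exists phi : series -> {poly rat},
    (forall (a : rat) (f g : series), inY f -> inY g ->
        phi (fun m => a * f m + g m) = a *: phi f + phi g) /\
    (forall P : signed_poset, phi (YP P) = 'X^(nsinks P)).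
Proof.
exists phi; split.
  move=> a f g /inY_support_below[Df fD] /inY_support_below[Dg gD].
  have fM : support_below f (maxn Df Dg) by move=> m /(leq_trans (leq_maxl _ _)) /fD.
  have gM : support_below g (maxn Df Dg) by move=> m /(leq_trans (leq_maxr _ _)) /gD.
  have hM : support_below (fun m => a * f m + g m) (maxn Df Dg).
    by move=> m Mm; rewrite fM ?gM // mulr0 addr0.
  rewrite (phiE hM) (phiE fM) (phiE gM) scaler_sumr -big_split.
  by apply: eq_bigr => n _; apply: sink_functional_linear.
move=> P; rewrite (phiE (@support_below_YP P)) big_ord_recr /= sink_functional_YP.
by rewrite big1 ?add0r // => n _; apply: sink_functional_YP_neq; rewrite neq_ltn ltn_ord.
Qed.
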